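(* There exists an online adaptive algorithm that, given an uncertainty matroid $\mathcal{M}$ with uniform query costs and a minimum-weight basis $B$ (with respect to the unknown weights $w$) that can be verified by a minimum-cardinality certificate $Q^*$ of $\mathcal{M}$, queries a set $Q$ with $|Q|\le 2|Q^*|$ that is a certificate verifying $B$.
   Context: A weighted uncertainty matroid $\mathcal{M}=(E,\mathcal{I},A,w)$ consists of a matroid $M=(E,\mathcal{I})$ on a finite set $E$, for each $e\in E$ a non-empty finite union $A_e$ of bounded real intervals (each open or closed), and a weight $w_e\in A_e$. A minimum-weight basis (MWB) is a basis minimizing total weight. A weight assignment is $w^*$ with $w^*_e\in A_e$, consistent with $Q$ if $w^*_e=w_e$ on $Q$. $Q$ verifies an MWB $B$ (is a certificate for $B$) if for every weight assignment consistent with $Q$, $B$ is an MWB with respect to it; a certificate for $\mathcal{M}$ is a set verifying some MWB, and a minimum-cardinality certificate is one of minimum size. In the online adaptive setting the algorithm knows $M$ and the areas $A_e$ but initially not the weights; querying an element $e$ reveals $w_e$ (at unit cost), and the algorithm chooses queries adaptively based on previously revealed weights; $Q$ denotes the set of queried elements. *)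

From mathcomp Require Import all_boot all_order all_algebra.
From mathcomp Require Import reals.
Set Implicit Arguments. Unset Strict Implicit. Unset Printing Implicit Defensive.
Import Order.TTheory GRing.Theory Num.Theory.
Local Open Scope ring_scope.

Record matroid (E : finType) := Matroid {
  indep : pred {set E};
  indep0 : indep set0;
  indep_sub : forall X Y : {set E}, Y \subset X -> indep X -> indep Y;
  indep_exch : forall X Y : {set E}, indep X -> indep Y -> (#|X| < #|Y|)%N ->
    exists2 e, e \in Y :\: X & indep (e |: X)
}.

Definition is_basis (E : finType) (M : matroid E) (B : {set E}) : Prop :=
  indep M B /\ forall X : {set E}, indep M X -> B \subset X -> X = B.

Definition is_MWB (R : realType) (E : finType) (M : matroid E) (w : E -> R)
    (B : {set E}) : Prop :=
  is_basis M B /\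
  forall B' : {set E}, is_basis M B' -> \sum_(e in B) w e <= \sum_(e in B') w e.

Record piece (R : realType) := Piece { pclosed : bool; plo : R; phi : R }.

Definition in_piece (R : realType) (p : piece R) (x : R) : bool :=
  if pclosed p then (plo p <= x) && (x <= phi p) else (plo p < x) && (x < phi p).

Definition area (R : realType) := seq (piece R).

Definition in_area (R : realType) (a : area R) (x : R) : bool :=
  has (fun p => in_piece p x) a.

Definition area_nonempty (R : realType) (a : area R) : Prop :=
  exists x, in_area a x.

Definition consistent (R : realType) (E : finType) (A : E -> area R)
    (w : E -> R) (Q : {set E}) (w' : E -> R) : Prop :=
  (forall e, in_area (A e) (w' e)) /\ (forall e, e \in Q -> w' e = w e).

Definition verifies (R : realType) (E : finType) (M : matroid E)
    (A : E -> area R) (w : E -> R) (Q B : {set E}) : Prop :=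
  forall w' : E -> R, consistent A w Q w' -> is_MWB M w' B.

Definition certificate (R : realType) (E : finType) (M : matroid E)
    (A : E -> area R) (w : E -> R) (Q : {set E}) : Prop :=
  exists B, verifies M A w Q B.

Definition min_certificate (R : realType) (E : finType) (M : matroid E)
    (A : E -> area R) (w : E -> R) (Q : {set E}) : Prop :=
  certificate M A w Q /\
  forall Q' : {set E}, certificate M A w Q' -> (#|Q| <= #|Q'|)%N.

(* knowledge state: revealed weights (None = not yet queried) *)
Definition kstate (R : realType) (E : finType) := {ffun E -> option R}.

(* a strategy maps the current knowledge to the next query, or None = stop *)
Definition strategy (R : realType) (E : finType) := kstate R E -> option E.

Definition init_state (R : realType) (E : finType) : kstate R E :=
  [ffun _ => None].

Definition reveal (R : realType) (E : finType) (w : E -> R) (st : kstate R E)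
    (e : E) : kstate R E :=
  [ffun x => if x == e then Some (w e) else st x].

Fixpoint run (R : realType) (E : finType) (S : strategy R E) (w : E -> R)
    (k : nat) (st : kstate R E) : kstate R E :=
  match k with
  | 0 => st
  | k'.+1 => match S st with
             | None => st
             | Some e => run S w k' (reveal w st e)
             end
  end.

Definition queried (R : realType) (E : finType) (st : kstate R E) : {set E} :=
  [set e | st e != None].

From mathcomp Require Import all_boot all_order all_algebra.
From mathcomp Require Import reals boolp zify.
Import Order.TTheory GRing.Theory Num.Theory.
Local Open Scope ring_scope.
Set Implicit Arguments. Unset Strict Implicit.

(* A basis B has minimum weight iff w f <= w e for every exchange pair (f, e),
   i.e. f in B, e notin B and B - f + e independent; hence Q verifies B iff Q
   certifies each of these comparisons.  Pairs certified without any query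
   cost nothing.  Every other pair, an a-priori violation, has an endpoint in
   Q*, so the vertex set T of a greedy maximal matching of a-priori violations
   has at most twice as many elements as it shares with Q*.  The strategy
   queries T, then any unqueried endpoint of a still uncertified exchange pair.
   Once T is queried, such a pair has a queried endpoint (being an a-priori
   violation, it meets T), and its other endpoint lies in Q* (otherwise Q*
   would not certify it either).  So Q is contained in the union of T and Q*,
   and |Q| <= |T| + |Q* \ T| <= 2 |Q*|. *)

Section MatroidBases.
Variables (E : finType) (M : matroid E).

Lemma card_indep_le_basis (X Z : {set E}) :
  is_basis M X -> indep M Z -> (#|Z| <= #|X|)%N.
Proof.
move=> [iX maxX] iZ; rewrite leqNgt; apply/negP => ltXZ.
have [e /setDP [_ eX] ieX] := indep_exch iX iZ ltXZ.
by move: eX; rewrite -(maxX _ ieX (subsetUr _ _)) setU11.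
Qed.

Lemma eq_card_bases (X Y : {set E}) :
  is_basis M X -> is_basis M Y -> #|X| = #|Y|.
Proof.
move=> bX bY; apply/eqP; rewrite eqn_leq.
by rewrite (card_indep_le_basis bY bX.1) (card_indep_le_basis bX bY.1).
Qed.

Lemma indep_card_basis (X Z : {set E}) :
  is_basis M X -> indep M Z -> #|Z| = #|X| -> is_basis M Z.
Proof.
move=> bX iZ cardZ; split=> // Z' iZ' sZZ'.
apply/eqP; rewrite eq_sym eqEcard sZZ' cardZ.
exact: card_indep_le_basis.
Qed.

Lemma basis_extend (I X : {set E}) : indep M I -> is_basis M X ->
  exists Z, [/\ is_basis M Z, I \subset Z & Z \subset I :|: X].
Proof.
move=> iI bX.
pose between := [pred Z : {set E} | [&& indep M Z, I \subset Z & Z \subset I :|: X]].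
have betweenI : between I by rewrite /= iI subxx subsetUl.
have [Z /and3P [iZ sIZ sZ] maxZ] := arg_maxnP (fun Z : {set E} => #|Z|) betweenI.
exists Z; split=> //; apply: (indep_card_basis bX iZ).
apply/eqP; rewrite eqn_leq (card_indep_le_basis bX iZ) leqNgt; apply/negP => ltZX.
have [e /setDP [eX eZ] ieZ] := indep_exch iZ bX.1 ltZX.
have /maxZ : between (e |: Z).
  rewrite /= ieZ (subset_trans sIZ (subsetUr _ _)) subUset sZ andbT.
  by rewrite sub1set inE eX orbT.
by rewrite /= cardsU1 eZ add1n ltnn.
Qed.

Lemma basis_exchange (X Y : {set E}) y :
  is_basis M X -> is_basis M Y -> y \in Y :\: X ->
  exists2 x, x \in X :\: Y & is_basis M (y |: (X :\ x)).
Proof.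
move=> bX bY /setDP [yY yX].
have iI : indep M (y |: (X :&: Y)).
  by apply: (indep_sub _ bY.1); rewrite subUset sub1set yY subsetIr.
have [Z [bZ sIZ sZ]] := basis_extend iI bX.
have cardZ := eq_card_bases bZ bX.
have /subsetPn [x xX xZ] : ~~ (X \subset Z).
  apply/negP => sXZ; have /subset_leq_card : y |: X \subset Z.
    by rewrite subUset sXZ andbT sub1set (subsetP sIZ) ?setU11.
  by rewrite cardsU1 yX cardZ ltnn.
have xY : x \notin Y.
  by apply: contra xZ => xY; apply: (subsetP sIZ); rewrite !inE xX xY orbT.
exists x; first by rewrite inE xY xX.
suff -> : y |: (X :\ x) = Z by [].
apply/eqP; rewrite eq_sym eqEcard cardsU1 !inE negb_and yX orbT cardZ.
rewrite (cardsD1 x X) xX leqnn andbT.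
apply/subsetP => z zZ; have := subsetP sZ z zZ.
have zx : z != x by apply: contraNneq xZ => <-.
by rewrite !inE zx => /orP [/orP [->|/andP [-> _]]|->]; rewrite ?orbT.
Qed.

End MatroidBases.

Section MinimumWeightBases.
Variables (R : realType) (E : finType) (M : matroid E) (w : E -> R).

Definition exchange_pair (B : {set E}) (f e : E) : bool :=
  [&& f \in B, e \notin B & indep M (e |: (B :\ f))].

Lemma exchange_pair_basis (B : {set E}) f e :
  is_basis M B -> exchange_pair B f e -> is_basis M (e |: (B :\ f)).
Proof.
move=> bB /and3P [fB eB ieB]; apply: (indep_card_basis bB ieB).
by rewrite cardsU1 !inE (negbTE eB) andbF (cardsD1 f B) fB.
Qed.

Lemma sum_exchange (B : {set E}) f e : f \in B -> e \notin B ->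
  \sum_(x in e |: (B :\ f)) w x + w f = \sum_(x in B) w x + w e.
Proof.
move=> fB eB; rewrite (big_setD1 f fB) big_setU1 /=; last first.
  by rewrite !inE (negbTE eB) andbF.
by rewrite addrAC [RHS]addrC addrA.
Qed.

Lemma MWB_exchange_le (B : {set E}) f e :
  is_MWB M w B -> exchange_pair B f e -> w f <= w e.
Proof.
move=> [bB minB] efe; have minBe := minB _ (exchange_pair_basis bB efe).
case/and3P: efe => fB eB _.
by rewrite -(lerD2l (\sum_(x in B) w x)) -(sum_exchange fB eB) lerD2r.
Qed.

Section LocalMinimality.
Variable B : {set E}.
Hypotheses (bB : is_basis M B)
  (locminB : forall f e, exchange_pair B f e -> w f <= w e).

Lemma exchange_closer (B' : {set E}) : is_basis M B' -> ~~ (B' \subset B) ->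
  exists B'', [/\ is_basis M B'', (#|B'' :\: B| < #|B' :\: B|)%N
                & \sum_(x in B'') w x <= \sum_(x in B') w x].
Proof.
(* Bringing a lightest e0 of B' - B into B frees some f with w f <= w e0;
   putting f back into B' in place of some e of B' - B cannot increase the
   weight. *)
move=> bB' /subsetPn [e1 e1B' e1B].
have e1BB : e1 \in B' :\: B by rewrite inE e1B e1B'.
have [e0 e0BB minw] := arg_minP w e1BB.
have [f fBB' bfe0] := basis_exchange bB bB' e0BB.
have [e eB'B bef] := basis_exchange bB' bB fBB'.
case/setDP: fBB' => fB fB'; case/setDP: e0BB => e0B' e0B.
have wfe : w f <= w e.
  apply: (le_trans (locminB _)) (minw _ eB'B).
  by rewrite /exchange_pair fB e0B bfe0.1.
case/setDP: eB'B => eB' eB.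
exists (f |: (B' :\ e)); split=> //.
  have -> : (f |: (B' :\ e)) :\: B = (B' :\: B) :\ e.
    apply/setP => z; rewrite !inE.
    by case: (z =P f) => [->|_]; [rewrite fB andbF | rewrite /= andbCA].
  by rewrite [ltnRHS](cardsD1 e) !inE eB eB'.
by rewrite -(lerD2r (w e)) sum_exchange // lerD2l.
Qed.

Lemma locally_min_basis_MWB : is_MWB M w B.
Proof.
split=> // B'; have [n] := ubnP #|B' :\: B|; elim: n B' => // n IHn B' ltB'n bB'.
have [sB'B|nsB'B] := boolP (B' \subset B); first by rewrite (bB'.2 B bB.1 sB'B).
have [B'' [bB'' ltB'' leB'']] := exchange_closer bB' nsB'B.
exact: le_trans (IHn _ (leq_trans ltB'' ltB'n) bB'') leB''.
Qed.

End LocalMinimality.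
End MinimumWeightBases.

Section GreedyMatching.
Variables (T : finType) (r : rel T).

Definition vertex_cover (C : {set T}) : Prop :=
  forall x y, r x y -> (x \in C) || (y \in C).

Definition greedy_step (S : {set T}) (p : T * T) : {set T} :=
  if [&& r p.1 p.2, p.1 \notin S & p.2 \notin S] then p.1 |: (p.2 |: S) else S.

Definition greedy_matching : {set T} := foldl greedy_step set0 (enum [set: T * T]).

Lemma greedy_foldl_sub (s : seq (T * T)) (S : {set T}) :
  S \subset foldl greedy_step S s.
Proof.
elim: s S => [|p s IHs] S /=; first exact: subxx.
apply: subset_trans (IHs _); rewrite /greedy_step; case: ifP => _ //.
exact: subset_trans (subsetUr _ S) (subsetUr _ _).
Qed.

Lemma greedy_foldl_cover (s : seq (T * T)) (S : {set T}) x y :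
  (x, y) \in s -> r x y ->
  (x \in foldl greedy_step S s) || (y \in foldl greedy_step S s).
Proof.
elim: s S => [|p s IHs] S //=; rewrite inE => /orP [/eqP <-|xys] rxy; last exact: IHs.
have /subsetP sub := greedy_foldl_sub s (greedy_step S (x, y)).
have : (x \in greedy_step S (x, y)) || (y \in greedy_step S (x, y)).
  rewrite /greedy_step /= rxy; case: ifPn => [_|]; first by rewrite setU11.
  by rewrite /= negb_and !negbK.
by case/orP => /sub ->; rewrite ?orbT.
Qed.

Lemma greedy_matching_cover : vertex_cover greedy_matching.
Proof. by move=> x y; apply: greedy_foldl_cover; rewrite mem_enum inE. Qed.

Lemma greedy_foldl_card (C : {set T}) (s : seq (T * T)) (S : {set T}) :
  irreflexive r -> vertex_cover C -> (#|S| <= 2 * #|C :&: S|)%N ->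
  (#|foldl greedy_step S s| <= 2 * #|C :&: foldl greedy_step S s|)%N.
Proof.
move=> irr_r coverC; elim: s S => [|[x y] s IHs] S //= leS; apply: IHs.
rewrite /greedy_step /=; case: ifP => // /and3P [rxy xS yS].
have xy : x != y by apply: contraTneq rxy => ->; rewrite irr_r.
have [z zxy zC] : exists2 z, z \in [set x; y] & z \in C.
  by case/orP: (coverC _ _ rxy); [exists x | exists y]; rewrite ?set21 ?set22.
have zS : z \notin S by case/set2P: zxy => ->.
have /subset_leq_card : z |: (C :&: S) \subset C :&: (x |: (y |: S)).
  rewrite subUset sub1set in_setI zC setUA (subsetP (subsetUl _ _) _ zxy).
  by rewrite setIS ?subsetUr.
rewrite cardsU1 in_setI (negbTE zS) andbF add1n => ltS.
rewrite !cardsU1 !inE (negbTE xy) (negbTE xS) (negbTE yS); lia.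
Qed.

Lemma greedy_matching_card (C : {set T}) : irreflexive r -> vertex_cover C ->
  (#|greedy_matching| <= 2 * #|C :&: greedy_matching|)%N.
Proof. by move=> irr_r coverC; apply: greedy_foldl_card; rewrite ?cards0 ?setI0. Qed.

Lemma card_sub_matching_cover (P S C : {set T}) :
  P \subset S :|: C -> (#|S| <= 2 * #|C :&: S|)%N -> (#|P| <= 2 * #|C|)%N.
Proof.
move=> sP leS; have := cardsID S C; have := subset_leq_card sP.
by rewrite cardsU setIC; lia.
Qed.

End GreedyMatching.

Section Certification.
Variables (R : realType) (E : finType) (M : matroid E) (A : E -> area R).

Definition certified (w : E -> R) (Q : {set E}) (f e : E) : Prop :=
  forall w', consistent A w Q w' -> w' f <= w' e.

Lemma eq_certified (w1 w2 : E -> R) (Q : {set E}) f e :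
  {in Q, w1 =1 w2} -> certified w1 Q f e -> certified w2 Q f e.
Proof.
by move=> w12 cert w' [w'A w'Q]; apply: cert; split=> // x xQ; rewrite w'Q ?w12.
Qed.

Lemma certified_sub (w : E -> R) (Q1 Q2 : {set E}) f e :
  (forall x, in_area (A x) (w x)) -> Q1 :&: [set f; e] \subset Q2 ->
  certified w Q1 f e -> certified w Q2 f e.
Proof.
move=> wA sQ cert w' [w'A w'Q].
(* Only the values at [f] and [e] matter: patch [w'] with [w] elsewhere. *)
pose w'' x := if x \in [set f; e] then w' x else w x.
have : w'' f <= w'' e.
  apply: cert; split=> [x|x xQ1]; rewrite /w''.
    by case: ifP => _; [apply: w'A | apply: wA].
  by case: ifP => // xfe; rewrite w'Q // (subsetP sQ) // inE xQ1 xfe.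
by rewrite /w'' set21 set22.
Qed.

Lemma certified_queried (w : E -> R) (Q : {set E}) f e :
  w f <= w e -> f \in Q -> e \in Q -> certified w Q f e.
Proof. by move=> wfe fQ eQ w' [_ w'Q]; rewrite !w'Q. Qed.

Lemma verifies_MWB (w : E -> R) (Q B : {set E}) :
  (forall x, in_area (A x) (w x)) -> verifies M A w Q B -> is_MWB M w B.
Proof. by move=> wA verQ; apply: verQ. Qed.

Lemma verifies_certified (w : E -> R) (Q B : {set E}) f e :
  verifies M A w Q B -> exchange_pair M B f e -> certified w Q f e.
Proof. by move=> verQ efe w' w'Q; apply: MWB_exchange_le (verQ _ w'Q) efe. Qed.

Lemma certified_verifies (w : E -> R) (Q B : {set E}) : is_basis M B ->
  (forall f e, exchange_pair M B f e -> certified w Q f e) -> verifies M A w Q B.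
Proof.
move=> bB cert w' w'Q; apply: locally_min_basis_MWB => // f e efe.
exact: cert.
Qed.

End Certification.

Section Runs.
Variables (R : realType) (E : finType) (w : E -> R).

Lemma queried_reveal (st : kstate R E) x : queried (reveal w st x) = x |: queried st.
Proof. by apply/setP => z; rewrite !inE ffunE; case: (z == x). Qed.

Definition truthful (st : kstate R E) : Prop :=
  forall x, x \in queried st -> st x = Some (w x).

Lemma truthful_init : truthful (init_state R E).
Proof. by move=> x; rewrite inE ffunE. Qed.

Lemma truthful_reveal st x : truthful st -> truthful (reveal w st x).
Proof.
move=> trst z; rewrite queried_reveal in_setU1 ffunE.
by case: eqP => [-> //|_ /= /trst].
Qed.

Variable S : strategy R E.

Lemma run_ind (P : kstate R E -> Prop) :
  (forall st x, P st -> S st = Some x -> P (reveal w st x)) ->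
  forall k st, P st -> P (run S w k st).
Proof.
move=> stepP; elim=> [|k IHk] st Pst //=.
by case Sst: (S st) => [x|] //; apply/IHk/stepP.
Qed.

Hypothesis S_fresh : forall st x, S st = Some x -> x \notin queried st.

Lemma run_progress k (st : kstate R E) :
  S (run S w k st) = None \/ (#|queried st| + k <= #|queried (run S w k st)|)%N.
Proof.
elim: k st => [|k IHk] st /=; first by right; rewrite addn0.
case Sst: (S st) => [x|]; last by left.
case: (IHk (reveal w st x)) => [|]; first by left.
by rewrite queried_reveal cardsU1 (S_fresh Sst) => ?; right; lia.
Qed.

Lemma run_stops : S (run S w #|E| (init_state R E)) = None.
Proof.
case: (run_progress #|E| (init_state R E)) => // le; case Sfin: S => [x|] //.
have /subset_leq_card : queried (run S w #|E| (init_state R E)) \subset [set~ x].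
  by apply/subsetP => z zq; rewrite !inE; apply: contraNneq (S_fresh Sfin) => <-.
have : (0 < #|E|)%N by apply/card_gt0P; exists x.
by move: le; rewrite cardsC1; lia.
Qed.

End Runs.

Section TwoPhaseStrategy.
Variables (R : realType) (E : finType) (M : matroid E) (A : E -> area R) (B : {set E}).

(* With nothing queried the reference weights are irrelevant, hence [fun=> 0]. *)
Definition apriori_violation (f e : E) : bool :=
  exchange_pair M B f e && ~~ `[< certified A (fun=> 0) set0 f e >].

Definition apriori_matching : {set E} := greedy_matching apriori_violation.

Definition known_weights (st : kstate R E) (x : E) : R := odflt 0 (st x).

Definition unresolved (st : kstate R E) (x : E) : bool :=
  `[< exists f e, [/\ exchange_pair M B f e, x \in [set f; e]
        & ~ certified A (known_weights st) (queried st) f e] >].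

Definition two_phase_strategy : strategy R E := fun st =>
  if [pick x in apriori_matching :\: queried st] is Some x then Some x
  else [pick x in ~: queried st | unresolved st x].

Lemma apriori_violation_irr : irreflexive apriori_violation.
Proof. by move=> x; rewrite /apriori_violation /exchange_pair; case: (x \in B). Qed.

Lemma two_phase_chosen st x : two_phase_strategy st = Some x ->
  x \notin queried st /\
  (x \in apriori_matching \/ apriori_matching \subset queried st /\ unresolved st x).
Proof.
rewrite /two_phase_strategy; case: pickP => [y /setDP [yT yq] [<-]|noT].
  by split; last left.
case: pickP => // y /andP [yq uy] [<-]; rewrite in_setC in yq.
split=> //; right; split=> //.
by apply/subsetP => z zT; apply: contraFT (noT z) => zq; rewrite in_setD zq zT.
Qed.

Lemma two_phase_fresh st x : two_phase_strategy st = Some x -> x \notin queried st.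
Proof. by case/two_phase_chosen. Qed.

Lemma two_phase_stopped st : two_phase_strategy st = None ->
  apriori_matching \subset queried st /\
  forall x, x \notin queried st -> ~~ unresolved st x.
Proof.
rewrite /two_phase_strategy; case: pickP => [//|noT]; case: pickP => [//|noU _].
split=> [|x xq]; last by move: (noU x); rewrite in_setC xq /= => ->.
by apply/subsetP => x xT; apply: contraFT (noT x) => xq; rewrite in_setD xq xT.
Qed.

Section Analysis.
Variables (w : E -> R) (Qs : {set E}).
Hypotheses (wA : forall x, in_area (A x) (w x)) (verQs : verifies M A w Qs B).

Lemma certified_known_weights st f e : truthful w st ->
  certified A (known_weights st) (queried st) f e <-> certified A w (queried st) f e.
Proof.
by move=> trst; split; apply: eq_certified => x xq; rewrite /known_weights trst.
Qed.

Lemma uncertified_apriori_violation (Q : {set E}) f e :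
  exchange_pair M B f e -> ~ certified A w Q f e -> apriori_violation f e.
Proof.
move=> efe ncert; rewrite /apriori_violation efe; apply/asboolPn => cert0.
apply: ncert (certified_sub wA _ (eq_certified _ cert0)).
  by rewrite set0I sub0set.
by move=> x; rewrite inE.
Qed.

Lemma uncertified_escapes_Qs (Q : {set E}) f e :
  exchange_pair M B f e -> ~ certified A w Q f e ->
  ~~ (Qs :&: [set f; e] \subset Q).
Proof.
move=> efe ncert; apply/negP => sQ; apply: ncert.
exact: certified_sub wA sQ (verifies_certified verQs efe).
Qed.

Lemma Qs_cover_apriori_violation : vertex_cover apriori_violation Qs.
Proof.
move=> f e /andP [efe /asboolPn ncert0].
have ncert : ~ certified A w set0 f e.
  by move=> cert; apply/ncert0/(eq_certified _ cert) => x; rewrite inE.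
have /subsetPn [x /setIP [xQs xfe] _] := uncertified_escapes_Qs efe ncert.
by case/set2P: xfe xQs => -> ->; rewrite ?orbT.
Qed.

Lemma two_phase_query_mem st x : truthful w st ->
  two_phase_strategy st = Some x -> x \in apriori_matching :|: Qs.
Proof.
move=> trst /two_phase_chosen [xq [xT|[TQ /asboolP [f [e [efe xfe ncert]]]]]].
  by rewrite inE xT.
have {}ncert : ~ certified A w (queried st) f e by rewrite -certified_known_weights.
have fe_q : (f \in queried st) || (e \in queried st).
  have /greedy_matching_cover := uncertified_apriori_violation efe ncert.
  by case/orP => /(subsetP TQ) ->; rewrite ?orbT.
have /subsetPn [y /setIP [yQs yfe] yq] := uncertified_escapes_Qs efe ncert.
suff -> : x = y by rewrite inE yQs orbT.
case/set2P: xfe xq => -> xq; case/set2P: yfe yq => -> yq //;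
  by rewrite (negbTE xq) (negbTE yq) in fe_q.
Qed.

Lemma two_phase_stop_verifies st : truthful w st ->
  two_phase_strategy st = None -> verifies M A w (queried st) B.
Proof.
move=> trst /two_phase_stopped [_ resolved].
have mwB := verifies_MWB wA verQs.
apply: certified_verifies mwB.1 _ => f e efe.
have [//|ncert] := pselect (certified A w (queried st) f e); exfalso.
have [x xfe xq] : exists2 x, x \in [set f; e] & x \notin queried st.
  case fq: (f \in queried st); last by exists f; rewrite ?set21 ?fq.
  case eQ: (e \in queried st); last by exists e; rewrite ?set22 ?eQ.
  by case: ncert; apply: certified_queried (MWB_exchange_le mwB efe) fq eQ.
move/negP: (resolved x xq); apply; apply/asboolP; exists f, e; split=> //.
by rewrite certified_known_weights.
Qed.

Lemma two_phase_run_sound k :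
  let st := run two_phase_strategy w k (init_state R E) in
  truthful w st /\ queried st \subset apriori_matching :|: Qs.
Proof.
pose sound st := truthful w st /\ queried st \subset apriori_matching :|: Qs.
apply: (run_ind (P := sound)).
  move=> st x [trst sQ] Sx; split; first exact: truthful_reveal.
  by rewrite queried_reveal subUset sub1set (two_phase_query_mem trst Sx).
by split; [exact: truthful_init | apply/subsetP => x; rewrite inE ffunE].
Qed.

End Analysis.
End TwoPhaseStrategy.

Theorem lemma30 (R : realType) (E : finType) (M : matroid E)
    (A : E -> area R) (B : {set E}) :
  (forall e, area_nonempty (A e)) ->
  exists S : strategy R E,
    forall w : E -> R,
      (forall e, in_area (A e) (w e)) ->
      is_MWB M w B ->
      forall Qstar : {set E},
        min_certificate M A w Qstar -> verifies M A w Qstar B ->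
        let final := run S w #|E| (init_state R E) in
        S final = None /\
        verifies M A w (queried final) B /\
        (#|queried final| <= 2 * #|Qstar|)%N.
Proof.
move=> _; exists (two_phase_strategy M A B) => w wA _ Qs _ verQs final.
have [trfinal sfinal] := two_phase_run_sound wA verQs #|E|.
have stop : two_phase_strategy M A B final = None.
  by apply: run_stops; apply: two_phase_fresh.
split=> //; split; first exact: (two_phase_stop_verifies wA verQs trfinal stop).
apply: card_sub_matching_cover sfinal _.
apply: greedy_matching_card (apriori_violation_irr M A B) _.
exact: Qs_cover_apriori_violation wA verQs.
Qed.
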